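(* Let $k$ be a field of characteristic $0$, $R=k[x_1,\dots,x_n]$, $\ell=x_1+\dots+x_n$, let $d_1,\dots,d_{n+1}$ be positive integers and $G=(x_1^{d_1},\dots,x_n^{d_n})\colon(\ell^{d_{n+1}})$. Then $R/G$ has the strong Lefschetz property.
   Context: A graded Artinian $k$-algebra $A$ has the strong Lefschetz property if there exists $\ell\in A_1$ such that for all $i$ and $j\ge0$ the multiplication map $\cdot\ell^j\colon A_i\to A_{i+j}$ is injective or surjective. *)

From HB Require Import structures.
From mathcomp Require Import all_boot all_algebra.
From mathcomp Require Import mpoly.
Set Implicit Arguments. Unset Strict Implicit. Unset Printing Implicit Defensive.
Import GRing.Theory.
Local Open Scope ring_scope.

(* Homogeneous of total degree [d] (every monomial in the support has
   total degree d); the zero polynomial is homogeneous of every degree. *)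
Definition homog_deg (n : nat) (k : fieldType) (d : nat) (p : {mpoly k[n]}) : bool :=
  p \is ishomog1 d (@mdeg n).

Definition in_powideal (n : nat) (k : fieldType) (d : 'I_n -> nat)
  (f : {mpoly k[n]}) : Prop :=
  exists h : 'I_n -> {mpoly k[n]}, f = \sum_(i < n) h i * 'X_i ^+ d i.

Definition lsum (n : nat) (k : fieldType) : {mpoly k[n]} := \sum_(i < n) 'X_i.

Definition in_colon (n : nat) (k : fieldType) (d : 'I_n -> nat) (e : nat)
  (f : {mpoly k[n]}) : Prop :=
  in_powideal d (f * (lsum n k) ^+ e).

(* The graded quotient A = R / J (J given by its membership predicate,
   a homogeneous ideal) has the strong Lefschetz property: there is
   L in A_1 (represented by a linear form of R_1) such that for all i, j,
   multiplication by L^j : A_i -> A_{i+j} is injective or surjective.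
   A_i = R_i / J_i, so:
   - injective: for f in R_i, f L^j in J implies f in J;
   - surjective: every g in R_{i+j} is congruent mod J to some f L^j, f in R_i. *)
Definition quot_SLP (n : nat) (k : fieldType) (J : {mpoly k[n]} -> Prop) : Prop :=
  exists L : {mpoly k[n]}, homog_deg 1 L /\
    forall i j : nat,
      (forall f : {mpoly k[n]}, homog_deg i f -> J (f * L ^+ j) -> J f)
      \/
      (forall g : {mpoly k[n]}, homog_deg (i + j) g ->
         exists f : {mpoly k[n]}, homog_deg i f /\ J (g - f * L ^+ j)).

(* Let I = (x_1^{d_1}, ..., x_n^{d_n}), A = R/I, and s = sum_i (d_i - 1) the top degree
   of A. Multiplication by l^j : A_a -> A_{a+j} is injective when 2a + j <= s and
   surjective when 2a + j >= s. Since f lies in G = I : l^e iff f l^e lies in I,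
   multiplication by l^j on (R/G)_a is injective or surjective according as
   2a + j + e <= s or not.
   Injectivity: F = sum_i ((d_i - 1) d/dx_i - x_i d^2/dx_i^2) preserves I and
   F(f l) = F(f) l + (s - 2a) f for f of degree a, so F(f l^(m+1)) - F(f) l^(m+1) is a
   nonzero multiple of f l^m when 2a + m < s (this is where characteristic 0 is used);
   induct on a and j.
   Surjectivity: the standard monomials x^m (m_i < d_i) form a basis of A, and the
   coefficient of x^q in x^p l^j equals the coefficient of x^(d-1-p) in x^(d-1-q) l^j,
   both being the coefficient of x^(d-1) in x^p x^(d-1-q) l^j. So l^j : A_a -> A_{a+j}
   has the same rank as l^j : A_{s-a-j} -> A_{s-a}, which is injective, and
   dim A_{s-a} = dim A_{a+j}. *)

From HB Require Import structures.
From mathcomp Require Import all_boot all_algebra.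
From mathcomp Require Import fingroup perm mpoly.
From mathcomp Require Import zify ring.
Import GRing.Theory.
Local Open Scope ring_scope.
Set Implicit Arguments. Unset Strict Implicit. Unset Printing Implicit Defensive.

Section MpolyFacts.
Variables (k : fieldType) (n : nat).
Local Notation R := {mpoly k[n]}.

Lemma mcoeffMXE (g : R) m m' :
  (g * 'X_[m])@_m' = if (m <= m')%MM then g@_(m' - m) else 0.
Proof.
case: ifP => le; first by rewrite -{1}(submK le) addmC mcoeffMX.
apply: memN_msupp_eq0; apply/negP.
rewrite (perm_mem (msuppMX _ _)) => /mapP [m'' _ E].
by rewrite E lem_addr in le.
Qed.

Lemma mcoeffXM (g : R) i m :
  ('X_i * g)@_m = if (0 < m i)%N then g@_(m - U_(i)) else 0.
Proof. by rewrite mulrC mcoeffMXE lep1mP lt0n. Qed.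

Lemma mcoeffX_mderiv (f : R) i m : ('X_i * f^`M(i))@_m = f@_m *+ m i.
Proof.
rewrite mcoeffXM mcoeff_deriv; case: (posnP (m i)) => [->|mi_gt0] //.
have le : (U_(i) <= m)%MM by rewrite lep1mP -lt0n.
by rewrite submK // mnmBE mnm1E eqxx subn1 prednK.
Qed.

Lemma homog_degP a (p : R) : homog_deg a p <-> (forall m, mdeg m != a -> p@_m = 0).
Proof.
split=> [hp m|hp]; first exact: dhomog_nemf_coeff.
apply/dhomogP => m; rewrite mcoeff_msupp => nz.
by apply/eqP; apply: contraR nz => /hp ->.
Qed.

Lemma homog_mderiv a (f : R) i : homog_deg a f -> homog_deg a.-1 f^`M(i).
Proof.
move/homog_degP => hf; apply/homog_degP => m ne.
by rewrite mcoeff_deriv hf ?mul0rn // mdegD mdeg1; move: ne; case: a {hf} => /=; lia.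
Qed.

Lemma mderiv_homog0 (f : R) i : homog_deg 0 f -> f^`M(i) = 0.
Proof.
move/homog_degP => hf; apply/mpolyP => m.
by rewrite mcoeff_deriv mcoeff0 hf ?mul0rn // mdegD mdeg1 addn1.
Qed.

Lemma sum_X_mderiv a (f : R) : homog_deg a f -> \sum_i 'X_i * f^`M(i) = f *+ a.
Proof.
move/homog_degP => hf; apply/mpolyP => m; rewrite raddf_sum mcoeffMn /=.
under eq_bigr do rewrite mcoeffX_mderiv.
rewrite sumrMnr -mdegE.
have [-> //|ne] := eqVneq (mdeg m) a.
by rewrite hf // !mul0rn.
Qed.

Lemma mderiv_lsum i : (lsum n k)^`M(i) = 1.
Proof.
rewrite /lsum raddf_sum (bigD1 i) //= big1 => [|j /negbTE nji].
  rewrite addr0 mderivX mnm1E eqxx scale1r -mpolyX0; congr 'X_[_].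
  by apply/mnmP => j; rewrite mnmBE mnm0E subnn.
by rewrite mderivX mnm1E nji scale0r.
Qed.

Lemma homog_lsum : homog_deg 1 (lsum n k).
Proof. by apply: rpred_sum => i _; rewrite /homog_deg dhomogX /= mdeg1. Qed.

Lemma homog_mul_lsumX a j (f : R) :
  homog_deg a f -> homog_deg (a + j) (f * lsum n k ^+ j).
Proof. by move=> hf; apply: dhomogM hf _; have := dhomogMn j homog_lsum; rewrite mul1n. Qed.

End MpolyFacts.

Section MonomialIdeal.
Variables (k : fieldType) (n : nat) (d : 'I_n -> nat).
Local Notation R := {mpoly k[n]}.
Local Notation I := (@in_powideal n k d).

Definition std_mnm (m : 'X_{1..n}) := [forall i, (m i < d i)%N].

Lemma in_powideal0 : I 0.
Proof. by exists (fun=> 0); rewrite big1 // => i _; rewrite mul0r. Qed.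

Lemma in_powidealD f g : I f -> I g -> I (f + g).
Proof.
case=> h1 ->; case=> h2 ->; exists (fun i => h1 i + h2 i).
by rewrite -big_split; apply: eq_bigr => i _; rewrite mulrDl.
Qed.

Lemma in_powidealMl g f : I f -> I (g * f).
Proof.
case=> h ->; exists (fun i => g * h i).
by rewrite mulr_sumr; apply: eq_bigr => i _; rewrite mulrA.
Qed.

Lemma in_powidealMr g f : I f -> I (f * g).
Proof. by rewrite mulrC; apply: in_powidealMl. Qed.

Lemma in_powideal_sum (T : Type) (r : seq T) (P : pred T) (F : T -> R) :
  (forall i, P i -> I (F i)) -> I (\sum_(i <- r | P i) F i).
Proof.
move=> IF; elim/big_rec: _ => [|i f Pi If]; first exact: in_powideal0.
by apply: in_powidealD => //; apply: IF.
Qed.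

Lemma in_powideal_mpolyX m : ~~ std_mnm m -> I 'X_[m].
Proof.
rewrite negb_forall => /existsP [i]; rewrite -leqNgt => dm.
have le : (U_(i) *+ d i <= m)%MM.
  by apply/mnm_lepP => j; rewrite mulmnE mnm1E; case: eqP => [<-|]; lia.
exists (fun j => if j == i then 'X_[m - U_(i) *+ d i] else 0).
rewrite (bigD1 i) //= eqxx big1 => [|j /negbTE ->]; last by rewrite mul0r.
by rewrite addr0 mpolyXn -mpolyXD submK.
Qed.

Lemma in_powideal_coefP f : I f <-> (forall m, std_mnm m -> f@_m = 0).
Proof.
split=> [[h ->] m /forallP std_m | f_std].
  rewrite raddf_sum big1 //= => i _; rewrite mpolyXn mcoeffMXE ifF //.
  by apply/negP => /mnm_lepP/(_ i); rewrite mulmnE mnm1E eqxx mul1n leqNgt std_m.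
rewrite (mpolyE f); apply: in_powideal_sum => m _.
have [std_m|nstd_m] := boolP (std_mnm m); first by rewrite f_std // scale0r; exact: in_powideal0.
by rewrite -mul_mpolyC; apply/in_powidealMl/in_powideal_mpolyX.
Qed.

Lemma in_powidealB f g : I f -> I g -> I (f - g).
Proof.
move=> /in_powideal_coefP If /in_powideal_coefP Ig; apply/in_powideal_coefP => m std_m.
by rewrite mcoeffB If // Ig // subr0.
Qed.

End MonomialIdeal.

Section Lowering.
Variables (k : fieldType) (n : nat) (d : 'I_n -> nat).
Local Notation R := {mpoly k[n]}.
Local Notation I := (@in_powideal n k d).
Local Notation ell := (lsum n k).

Definition socle_deg := (\sum_i (d i).-1)%N.
Local Notation s := socle_deg.

(* On k[x_i]/(x_i^{d_i}) the i-th summand maps x_i^m to m (d_i - m) x_i^(m-1). *)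
Definition lowering (f : R) : R :=
  \sum_i ((d i).-1%:R * f^`M(i) - 'X_i * f^`M(i)^`M(i)).

Lemma mcoeff_lowering f m :
  (lowering f)@_m = \sum_i f^`M(i)@_m * ((d i).-1%:R - (m i)%:R).
Proof.
rewrite raddf_sum /=; apply: eq_bigr => i _.
by rewrite mcoeffB mcoeffX_mderiv mulr_natl mcoeffMn mulrBr !mulr_natr.
Qed.

Lemma in_powideal_lowering f : I f -> I (lowering f).
Proof.
move/in_powideal_coefP => If; apply/in_powideal_coefP => m /forallP std_m.
rewrite mcoeff_lowering big1 // => i _; rewrite mcoeff_deriv.
have [lt_mi|eq_mi] : ((m i).+1 < d i)%N \/ (m i).+1 = d i by have := std_m i; lia.
  rewrite If ?mul0rn ?mul0r //; apply/forallP => j.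
  by rewrite mnmDE mnm1E; case: eqP => [<-|_]; have := std_m j; lia.
by rewrite -eq_mi subrr mulr0.
Qed.

Lemma homog_lowering a f : homog_deg a f -> homog_deg a.-1 (lowering f).
Proof.
move=> hf; apply/homog_degP => m ne; rewrite mcoeff_lowering big1 // => i _.
by move/homog_degP: (homog_mderiv i hf) => -> //; rewrite mul0r.
Qed.

Lemma lowering_homog0 f : homog_deg 0 f -> lowering f = 0.
Proof.
by move=> hf; rewrite /lowering big1 // => i _; rewrite mderiv_homog0 // mderiv0 !mulr0 subr0.
Qed.

Lemma lowering_mul_lsum a f : homog_deg a f ->
  lowering (f * ell) = lowering f * ell + (s%:R - (2 * a)%:R) * f.
Proof.
move=> hf.
have leibniz i : (d i).-1%:R * (f * ell)^`M(i) - 'X_i * (f * ell)^`M(i)^`M(i) =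
    ((d i).-1%:R * f^`M(i) - 'X_i * f^`M(i)^`M(i)) * ell
    + (d i).-1%:R * f - 2%:R * ('X_i * f^`M(i)).
  rewrite mderivM mderiv_lsum mulr1 mderivD mderivM mderiv_lsum; ring.
rewrite [LHS]/lowering (eq_bigr _ (fun i _ => leibniz i)) sumrB big_split /=.
rewrite -mulr_suml -/(lowering f) -mulr_sumr (sum_X_mderiv hf) -mulr_suml -natr_sum.
rewrite -/socle_deg -mulr_natl natrM; ring.
Qed.

Lemma lowering_mul_lsumX a m f : homog_deg a f ->
  lowering (f * ell ^+ m.+1) = lowering f * ell ^+ m.+1
    + (m.+1%:R * (s%:R - (2 * a)%:R - m%:R)) * (f * ell ^+ m).
Proof.
move=> hf; elim: m => [|m IH].
  by rewrite expr1 expr0 mulr1 (lowering_mul_lsum hf); ring.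
rewrite exprSr mulrA (lowering_mul_lsum (homog_mul_lsumX m.+1 hf)) IH.
rewrite !natrM !natrD !exprSr; ring.
Qed.

Section CharZero.
Hypothesis char0 : [pchar k] =i pred0.

Lemma in_powideal_natrM c g : (0 < c)%N -> I (c%:R * g) -> I g.
Proof.
move=> c_gt0 /in_powideal_coefP Icg; apply/in_powideal_coefP => m std_m.
apply/eqP; have := Icg m std_m; rewrite mulr_natl mcoeffMn -mulr_natr => /eqP.
by rewrite mulf_eq0 (pcharf0P k).1 // => /orP [//|/eqP c0]; rewrite c0 in c_gt0.
Qed.

Lemma in_powideal_lowering_mul_lsumX a m f : homog_deg a f ->
  I (f * ell ^+ m.+1) -> I (lowering f * ell ^+ m.+2).
Proof.
move=> hf If.
move: (lowering_mul_lsumX m.+1 hf) => /esym/(canRL (addrK _)) ->.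
apply: in_powidealB; last exact: in_powidealMl.
by apply: in_powideal_lowering; rewrite exprSr mulrA; exact: in_powidealMr.
Qed.

Lemma lsum_injective_of_lowering a f : homog_deg a f ->
  (forall m, (2 * a + m < s)%N -> I (f * ell ^+ m.+1) ->
     I (lowering f * ell ^+ m.+1)) ->
  forall j, (2 * a + j <= s)%N -> I (f * ell ^+ j) -> I f.
Proof.
move=> hf IL; elim=> [|m IHm] le_s If; first by rewrite expr0 mulr1 in If.
apply: IHm; first lia.
apply: (@in_powideal_natrM (m.+1 * (s - 2 * a - m))); first by rewrite muln_gt0; lia.
rewrite natrM !natrB; try lia.
move: (lowering_mul_lsumX m hf) => /esym/(canRL (addKr _)) ->.
rewrite addrC; apply: in_powidealB; first exact: in_powideal_lowering.
by apply: IL => //; lia.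
Qed.

Theorem lsum_injective a j f : homog_deg a f -> (2 * a + j <= s)%N ->
  I (f * ell ^+ j) -> I f.
Proof.
elim: a j f => [|a IHa] j f hf; apply: (lsum_injective_of_lowering hf) => m lt_s If.
  by rewrite lowering_homog0 // mul0r; exact: in_powideal0.
apply/in_powidealMr/(IHa m.+2 _ (homog_lowering hf)); first lia.
exact: in_powideal_lowering_mul_lsumX hf If.
Qed.

End CharZero.
End Lowering.

Lemma mxrank_conj_perm (k : fieldType) (N : nat) (s : 'S_N) (B : 'M[k]_N) :
  \rank (\matrix_(p, q) B (s p) (s q)) = \rank B.
Proof.
have -> : \matrix_(p, q) B (s p) (s q) = col_perm s (row_perm s B).
  by apply/matrixP => p q; rewrite !mxE.
rewrite col_permE mxrankMfree ?row_free_unit ?unitmx_perm // row_permE.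
apply/eqmx_rank/eqmxP; apply: eqmxMfull.
by rewrite row_full_unit unitmx_perm.
Qed.

Section StandardMonomials.
Variables (k : fieldType) (n : nat) (d : 'I_n -> nat).
Local Notation R := {mpoly k[n]}.
Local Notation I := (@in_powideal n k d).
Local Notation ell := (lsum n k).
Local Notation s := (socle_deg d).

(* A row vector r : 'rV_N encodes poly_of_row r, a combination of the standard
   monomials x^(mon p); in this basis lsum_mx j is multiplication by l^j on R/I and
   deg_proj a is the projection onto degree a. *)
Definition std_exp := {dffun forall i : 'I_n, 'I_(d i)}.
Local Notation N := #|std_exp|.

Definition mon (p : 'I_N) : 'X_{1..n} := [multinom (enum_val p i : nat) | i < n].

Lemma mon_inj : injective mon.
Proof.
move=> p q /mnmP eq_pq; apply/enum_val_inj/ffunP => i; apply: val_inj.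
by have := eq_pq i; rewrite !mnmE.
Qed.

Lemma std_mon p : std_mnm d (mon p).
Proof. by apply/forallP => i; rewrite mnmE. Qed.

Lemma in_powideal_monP f : I f <-> (forall p, f@_(mon p) = 0).
Proof.
rewrite in_powideal_coefP; split=> [If p|If m /forallP std_m]; first exact/If/std_mon.
have -> : m = mon (enum_rank ([ffun i => Ordinal (std_m i)] : std_exp)).
  by apply/mnmP => i; rewrite mnmE enum_rankK ffunE.
exact: If.
Qed.

Definition socle_mnm : 'X_{1..n} := [multinom (d i).-1 | i < n].

Lemma mdeg_socle_mnm : mdeg socle_mnm = s.
Proof. by rewrite mdegE; apply: eq_bigr => i _; rewrite mnmE. Qed.

Definition cmon (p : 'I_N) : 'I_N :=
  enum_rank ([ffun i => rev_ord (enum_val p i)] : std_exp).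

Lemma cmonK : involutive cmon.
Proof.
move=> p; rewrite /cmon enum_rankK -[RHS]enum_valK; congr enum_rank.
by apply/ffunP => i; rewrite !ffunE rev_ordK.
Qed.

Lemma mon_cmonD p : (mon (cmon p) + mon p)%MM = socle_mnm.
Proof.
apply/mnmP => i; rewrite mnmDE !mnmE enum_rankK ffunE /=.
by case: (enum_val p i) => u /= lt_u; lia.
Qed.

Lemma mdeg_mon_cmon p : mdeg (mon (cmon p)) = (s - mdeg (mon p))%N.
Proof. by rewrite -mdeg_socle_mnm -(mon_cmonD p) mdegD addnK. Qed.

Lemma mdeg_mon_le p : (mdeg (mon p) <= s)%N.
Proof. by rewrite -mdeg_socle_mnm -(mon_cmonD p) mdegD leq_addl. Qed.

Definition cmon_perm : 'S_N := perm (can_inj cmonK).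

Definition deg_proj a : 'M[k]_N := diag_mx (\row_p (mdeg (mon p) == a)%:R).

Definition lsum_mx j : 'M[k]_N := \matrix_(p, q) ('X_[mon p] * ell ^+ j)@_(mon q).

Definition poly_of_row (r : 'rV[k]_N) : R := \sum_p r 0 p *: 'X_[mon p].

Lemma mul_deg_proj (r : 'rV[k]_N) a q :
  (r *m deg_proj a) 0 q = r 0 q * (mdeg (mon q) == a)%:R.
Proof. by rewrite mul_mx_diag !mxE. Qed.

Lemma deg_projK a : deg_proj a *m deg_proj a = deg_proj a.
Proof.
apply/matrixP => p q; rewrite mul_mx_diag !mxE.
by have [->|_] := eqVneq p q; case: (_ == a); rewrite /= ?mulr1 ?mulr0 ?mulr0n ?mul0r.
Qed.

Lemma mcoeff_poly_of_row r q : (poly_of_row r)@_(mon q) = r 0 q.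
Proof.
rewrite raddf_sum (bigD1 q) //= big1 => [|p ne_pq].
  by rewrite mcoeffZ mcoeffX eqxx mulr1 addr0.
by rewrite mcoeffZ mcoeffX (inj_eq mon_inj) (negbTE ne_pq) mulr0.
Qed.

Lemma mcoeff_poly_of_row_lsumX r j q :
  (poly_of_row r * ell ^+ j)@_(mon q) = (r *m lsum_mx j) 0 q.
Proof.
rewrite mulr_suml raddf_sum !mxE /=; apply: eq_bigr => p _.
by rewrite -scalerAl mcoeffZ mxE.
Qed.

Lemma homog_poly_of_row r a : r *m deg_proj a = r -> homog_deg a (poly_of_row r).
Proof.
move=> ra; apply/homog_degP => m ne; rewrite raddf_sum big1 //= => p _.
rewrite mcoeffZ mcoeffX -ra mul_deg_proj.
have [eq_pm|_] := eqVneq (mon p) m; last by rewrite mulr0.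
by rewrite eq_pm (negbTE ne) mulr0 mul0r.
Qed.

Lemma deg_proj_lsum_mxE a j p q : (deg_proj a *m lsum_mx j) p q =
  ((mdeg (mon p) == a) && (mdeg (mon q) == a + j)%N)%:R * lsum_mx j p q.
Proof.
rewrite mul_diag_mx !mxE; have [dp|] := eqVneq (mdeg (mon p)) a; last by rewrite !mul0r.
have [//|ne] := eqVneq (mdeg (mon q)) (a + j)%N.
have hX : homog_deg a ('X_[mon p] : R) by rewrite /homog_deg dhomogX /= dp.
by move/homog_degP: (homog_mul_lsumX j hX) => -> //; rewrite !mulr0.
Qed.

Lemma deg_proj_lsum_mxK a j :
  deg_proj a *m lsum_mx j *m deg_proj (a + j)%N = deg_proj a *m lsum_mx j.
Proof.
apply/matrixP => p q; rewrite mul_mx_diag mxE !deg_proj_lsum_mxE !mxE.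
by case: (_ == a); case: (_ == _)%N; rewrite /= ?(mulr1n, mulr0n, mulr1, mulr0, mul0r).
Qed.

Lemma lsum_mx_cmon j p q : lsum_mx j (cmon q) (cmon p) = lsum_mx j p q.
Proof.
rewrite !mxE -(mcoeffMX _ (mon p) (mon (cmon p))) addmC mon_cmonD.
rewrite -(mcoeffMX _ (mon (cmon q)) (mon q)) mon_cmonD.
by congr (_ @_ _); ring.
Qed.

Lemma mxrank_deg_proj_compl a : (a <= s)%N ->
  \rank (deg_proj (s - a)%N) = \rank (deg_proj a).
Proof.
move=> le_as; rewrite -[RHS](mxrank_conj_perm cmon_perm); congr (\rank _).
apply/matrixP => p q; rewrite !mxE !permE (inj_eq (can_inj cmonK)) mdeg_mon_cmon.
have := mdeg_mon_le p; case: (p == q) => //= le_ps.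
by congr (_%:R *+ _); apply/eqP/eqP; lia.
Qed.

Lemma mxrank_deg_proj_lsum_mx_dual a j : (a + j <= s)%N ->
  \rank (deg_proj a *m lsum_mx j) = \rank (deg_proj (s - a - j)%N *m lsum_mx j).
Proof.
move=> le_s; rewrite -mxrank_tr -[RHS](mxrank_conj_perm cmon_perm); congr (\rank _).
apply/matrixP => q p; rewrite [LHS]mxE [RHS]mxE !permE !deg_proj_lsum_mxE.
rewrite lsum_mx_cmon !mdeg_mon_cmon; congr (_%:R * _).
have := mdeg_mon_le p; have := mdeg_mon_le q.
by rewrite andbC => le_qs le_ps; congr (_ && _); apply/eqP/eqP; lia.
Qed.

Section CharZero.
Hypothesis char0 : [pchar k] =i pred0.

Lemma mxrank_deg_proj_lsum_mx a j : (2 * a + j <= s)%N ->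
  \rank (deg_proj a *m lsum_mx j) = \rank (deg_proj a).
Proof.
move=> le_s; have := mxrank_mul_ker (deg_proj a) (lsum_mx j).
suff -> : (deg_proj a :&: kermx (lsum_mx j))%MS = 0 by rewrite mxrank0 addn0.
apply/row_matrixP => i; rewrite row0; set v := row i _.
have v_cap : (v <= deg_proj a :&: kermx (lsum_mx j))%MS by exact: row_sub.
have /submxP [w vw] := submx_trans v_cap (capmxSl _ _).
have /sub_kermxP v_ker := submx_trans v_cap (capmxSr _ _).
have homog_v : homog_deg a (poly_of_row v).
  by apply: homog_poly_of_row; rewrite vw -mulmxA deg_projK.
have /in_powideal_monP Iv : I (poly_of_row v).
  apply: (lsum_injective char0 homog_v le_s); apply/in_powideal_monP => q.
  by rewrite mcoeff_poly_of_row_lsumX v_ker mxE.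
by apply/rowP => q; rewrite -mcoeff_poly_of_row Iv mxE.
Qed.

Theorem lsum_surjective a j g : (s <= 2 * a + j)%N -> homog_deg (a + j) g ->
  exists f, homog_deg a f /\ I (g - f * ell ^+ j).
Proof.
move=> ge_s /homog_degP hg; have [le_s|gt_s] := leqP (a + j) s; last first.
  exists 0; split; first exact: dhomog0.
  rewrite mul0r subr0; apply/in_powideal_monP => q; rewrite hg //.
  by apply: contraTneq (mdeg_mon_le q) => ->; rewrite -ltnNge.
pose M := deg_proj a *m lsum_mx j.
have rank_M : \rank M = \rank (deg_proj (a + j)%N).
  rewrite mxrank_deg_proj_lsum_mx_dual // mxrank_deg_proj_lsum_mx; last lia.
  by rewrite -subnDA mxrank_deg_proj_compl.
have M_sub : (M <= deg_proj (a + j)%N)%MS by rewrite /M -deg_proj_lsum_mxK submxMl.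
have /andP [_ sub_M] : (M == deg_proj (a + j)%N)%MS.
  by rewrite -(mxrank_leqif_eq M_sub).2 rank_M.
pose v := \row_q g@_(mon q).
have /submxP [w vw] : (v <= M)%MS.
  apply: submx_trans sub_M; suff <- : v *m deg_proj (a + j)%N = v by exact: submxMl.
  apply/rowP => q; rewrite mul_deg_proj mxE.
  by have [_|ne] := eqVneq (mdeg (mon q)) (a + j)%N; rewrite ?mulr1 // mulr0 hg.
exists (poly_of_row (w *m deg_proj a)); split.
  by apply: homog_poly_of_row; rewrite -mulmxA deg_projK.
apply/in_powideal_monP => q.
by rewrite mcoeffB mcoeff_poly_of_row_lsumX -mulmxA -/M -vw mxE subrr.
Qed.

End CharZero.
End StandardMonomials.

Unset Implicit Arguments.

Theorem mainTheorem14 (k : fieldType) (n : nat)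
  (d : 'I_n -> nat) (e : nat) :
  [pchar k] =i pred0 ->
  (forall i, (0 < d i)%N) -> (0 < e)%N ->
  quot_SLP (in_colon (k := k) d e).
Proof.
move=> char0 _ _; exists (lsum n k); split; first exact: homog_lsum.
move=> i j; rewrite /in_colon.
have [le_s|gt_s] := leqP (2 * i + (j + e)) (socle_deg d).
- left=> f hf; rewrite -mulrA -exprD => I_fl.
  exact/in_powidealMr/(lsum_injective char0 hf le_s I_fl).
- right=> g hg.
  have hge : homog_deg (i + (j + e)) (g * lsum n k ^+ e).
    by rewrite addnA; exact: homog_mul_lsumX.
  have [f [hf I_gf]] := lsum_surjective char0 (ltnW gt_s) hge.
  by exists f; split; rewrite // mulrBl -mulrA -exprD.
Qed.
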